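(* Let $m\geq 1$, let $\zeta=\zeta_m$ be a primitive $m$th root of unity, let $C_m$ be cyclic of order $m$ with generator $c$, and consider the cyclic Wedderburn embedding \[ \omega_m\colon\mathbb{Z}[\zeta]C_m\to\prod_{j\in[0,m-1]}\mathbb{Z}[\zeta],\qquad c\mapsto(\zeta^j)_{j\in[0,m-1]}. \] Then: (i) $G_{\zeta^{-1}}^{\mathrm{T}}\,V_{\zeta}\,G_{\zeta^{-1}}=m\,(D_{\zeta^{-1}})^{-1}$, and this is a diagonal matrix whose $(i+1)$st diagonal entry, $i\in[0,m-1]$, equals \[ \frac{m\,\zeta^{(i^2)}}{\prod_{j\in[1,i]}(1-\zeta^j)}. \] (ii) The image of $\omega_m$ is \[ \Bigl\{(y_j)_{j\in[0,m-1]}\in\prod_{j\in[0,m-1]}\mathbb{Z}[\zeta]\;\Bigm|\;\sum_{j\in[i,m-1]}y_j\begin{bmatrix}j\\ i\end{bmatrix}_{\zeta^{-1}}\in\mathbb{Z}[\zeta]\cdot\frac{m}{\prod_{j\in[1,i]}(1-\zeta^j)}\ \text{for all }i\in[0,m-1]\Bigr\}, \] where the membership is taken inside $\mathbb{Q}(\zeta)$. (iii) A $\mathbb{Z}[\zeta]$-linear basis of the image of $\omega_m$ is given by the elements, indexed by $j\in[0,m-1]$, \[ \Bigl((-1)^k\zeta^{\binom{k}{2}}\frac{m}{\prod_{l\in[1,j]}(1-\zeta^l)}\begin{bmatrix}j\\ k\end{bmatrix}_{\zeta}\Bigr)_{k\in[0,m-1]}\in\prod_{k\in[0,m-1]}\mathbb{Z}[\zeta].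 \]
   Context: For an indeterminate $q$ and integers $i\ge0$, $j\in\mathbb{Z}$: $[i]=(q^i-1)/(q-1)$, $[i]!=\prod_{k=1}^i[k]$ (so $[0]!=1$), and the Gaussian binomial $\begin{bmatrix}i\\ j\end{bmatrix}=\begin{bmatrix}i\\ j\end{bmatrix}_q=[i]!/([j]![i-j]!)$ if $j\in[0,i]$ and $0$ otherwise; specializing $q$ to a root of unity gives the values written with subscript. The $m\times m$ matrices (rows and columns indexed by $[0,m-1]$) are $G_q=(\begin{bmatrix}i\\ j\end{bmatrix})_{i,j}$, $V_q=(q^{ij})_{i,j}$, and $D_q$ the diagonal matrix with $i$th entry $[i]!\,(q-1)^i\,q^{\binom{i}{2}}$; $^{\mathrm T}$ denotes transpose. Interval $[a,b]=\{x\in\mathbb{Z}:a\le x\le b\}$. *)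

(* ambient field: algC (algebraic complex numbers), which contains
   Q(zeta) for every root of unity zeta. *)
From mathcomp Require Import all_boot all_order all_algebra all_field.
Set Implicit Arguments. Unset Strict Implicit. Unset Printing Implicit Defensive.
Import GRing.Theory Num.Theory.
Local Open Scope ring_scope.

Definition qint_poly (i : nat) : {poly rat} := \sum_(k < i) 'X^k.
Definition qfact_poly (i : nat) : {poly rat} := \prod_(1 <= k < i.+1) qint_poly k.
(* Gaussian binomial [i]!/([j]! [i-j]!) if j in [0,i], else 0 (it is a polynomial) *)
Definition gbinom_poly (i j : nat) : {poly rat} :=
  if (j <= i)%N then qfact_poly i %/ (qfact_poly j * qfact_poly (i - j)) else 0.

Definition qfact (q : algC) (i : nat) : algC := (map_poly ratr (qfact_poly i)).[q].
Definition gbinom (q : algC) (i j : nat) : algC := (map_poly ratr (gbinom_poly i j)).[q].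

Definition Gmx (m : nat) (q : algC) : 'M[algC]_m := \matrix_(i < m, j < m) gbinom q i j.
Definition Vmx (m : nat) (q : algC) : 'M[algC]_m := \matrix_(i < m, j < m) q ^+ (i * j).
Definition Dmx (m : nat) (q : algC) : 'M[algC]_m :=
  diag_mx (\row_(i < m) (qfact q i * (q - 1) ^+ i * q ^+ 'C(i, 2))).

Definition in_Zzeta (z x : algC) : Prop := exists p : {poly int}, x = (map_poly intr p).[z].

(* cyclic Wedderburn embedding: the element sum_k a_k c^k of Z[zeta]C_m
   (a_k in Z[zeta]) is sent to (sum_k a_k (zeta^j)^k)_{j in [0,m-1]} *)
Definition omega (m : nat) (z : algC) (a : 'I_m -> algC) (j : 'I_m) : algC :=
  \sum_(k < m) a k * (z ^+ j) ^+ k.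

Definition omega_image (m : nat) (z : algC) (y : 'I_m -> algC) : Prop :=
  exists a : 'I_m -> algC, (forall k, in_Zzeta z (a k)) /\ (forall j, y j = omega z a j).

From mathcomp Require Import all_boot all_order all_algebra all_field.
From mathcomp Require Import ring zify.
Set Implicit Arguments. Unset Strict Implicit. Unset Printing Implicit Defensive.
Import GRing.Theory Num.Theory.
Local Open Scope ring_scope.

(* Put q = zeta^-1 and (q; q)_b = prod_(1 <= l <= b) (1 - q^l). By the
   q-binomial theorem,
     [j, b]_q (q; q)_b = prod_(l < b) (1 - q^j zeta^l)
                       = sum_s (-1)^s zeta^C(s,2) [b, s]_zeta q^(j s),
   so orthogonality of the characters j |-> zeta^(i j) shows that the (i, b)
   entry of V_zeta G_q is m (-1)^i zeta^C(i,2) [b, i]_zeta / (q; q)_b; it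
   vanishes for i > b. Hence G_q^T V_zeta G_q is upper triangular; being
   symmetric it is diagonal, with the entries of (i). As G_q is unitriangular
   with entries in Z[zeta], it is invertible over Z[zeta]: the image
   V_zeta Z[zeta]^m of omega_m equals V_zeta G_q Z[zeta]^m, which G_q^T maps
   onto the diagonal lattice of (i); this gives (ii), and the columns of
   V_zeta G_q, rescaled by units of Z[zeta], are the basis of (iii). *)

Lemma qfact_poly0 : qfact_poly 0 = 1.
Proof. by rewrite /qfact_poly big_geq. Qed.

Lemma qfact_polyS n : qfact_poly n.+1 = qfact_poly n * qint_poly n.+1.
Proof. by rewrite /qfact_poly big_nat_recr. Qed.

Lemma qint_poly0 : qint_poly 0 = 0.
Proof. by rewrite /qint_poly big_ord0. Qed.

Lemma qint_polyD a b : qint_poly (a + b) = qint_poly a + 'X^a * qint_poly b.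
Proof.
rewrite /qint_poly big_split_ord /= mulr_sumr; congr (_ + _).
by apply: eq_bigr => i _; rewrite exprD.
Qed.

Lemma qint_poly_neq0 k : (0 < k)%N -> qint_poly k != 0.
Proof.
move=> k_gt0; apply: contraTneq k_gt0 => qk0.
have : (qint_poly k).[1] = k%:R.
  rewrite /qint_poly horner_sum (eq_bigr (fun _ => 1)) => [|i _].
    by rewrite sumr_const card_ord.
  by rewrite hornerXn expr1n.
by rewrite qk0 horner0 => /esym/eqP; rewrite pnatr_eq0 => /eqP->.
Qed.

Lemma qfact_poly_neq0 n : qfact_poly n != 0.
Proof.
elim: n => [|n IHn]; first by rewrite qfact_poly0 oner_eq0.
by rewrite qfact_polyS mulf_neq0 // qint_poly_neq0.
Qed.

Lemma gbinom_poly_gt n k : (n < k)%N -> gbinom_poly n k = 0.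
Proof. by move=> ltnk; rewrite /gbinom_poly leqNgt ltnk. Qed.

Lemma gbinom_poly_unique n k P : (k <= n)%N ->
  P * (qfact_poly k * qfact_poly (n - k)) = qfact_poly n -> gbinom_poly n k = P.
Proof.
move=> lekn Pfact; rewrite /gbinom_poly lekn -Pfact mulpK //.
by rewrite mulf_neq0 ?qfact_poly_neq0.
Qed.

Lemma gbinom_poly_n0 n : gbinom_poly n 0 = 1.
Proof. by apply: gbinom_poly_unique; rewrite // qfact_poly0 subn0 !mul1r. Qed.

Section PascalStep.

Variable n : nat.
Hypothesis gbinom_polyK_n : forall k, (k <= n)%N ->
  gbinom_poly n k * (qfact_poly k * qfact_poly (n - k)) = qfact_poly n.

(* For [k = n] both sides vanish, since [gbinom_poly n n.+1 = 0 = qint_poly 0]. *)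
Let gbinom_polyK_shift k : (k <= n)%N ->
  gbinom_poly n k.+1 * (qfact_poly k.+1 * qfact_poly (n - k))
  = qfact_poly n * qint_poly (n - k).
Proof.
case: ltngtP => // [ltkn _ | -> _].
  have -> : (n - k = (n - k.+1).+1)%N by lia.
  by rewrite [qfact_poly (n - k.+1).+1]qfact_polyS -(gbinom_polyK_n ltkn); ring.
by rewrite gbinom_poly_gt // subnn qint_poly0 !mul0r mulr0.
Qed.

Lemma gbinom_poly_pascal_fact k : (k <= n)%N ->
  (gbinom_poly n k + 'X^(k.+1) * gbinom_poly n k.+1)
    * (qfact_poly k.+1 * qfact_poly (n - k)) = qfact_poly n.+1.
Proof.
move=> lekn; have ex_k := gbinom_polyK_n lekn.
have split_n : (n.+1 = k.+1 + (n - k))%N by lia.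
rewrite mulrDl -mulrA gbinom_polyK_shift // [in RHS]qfact_polyS split_n qint_polyD.
rewrite qfact_polyS -ex_k; ring.
Qed.

End PascalStep.

Lemma gbinom_polyK n k : (k <= n)%N ->
  gbinom_poly n k * (qfact_poly k * qfact_poly (n - k)) = qfact_poly n.
Proof.
elim: n k => [|n IHn] [|k] lekn //.
- by rewrite gbinom_poly_n0 qfact_poly0 !mul1r.
- by rewrite gbinom_poly_n0 qfact_poly0 subn0 !mul1r.
have pascal := gbinom_poly_pascal_fact IHn lekn.
by rewrite subSS (gbinom_poly_unique lekn pascal).
Qed.

Lemma gbinom_polySS n k :
  gbinom_poly n.+1 k.+1 = gbinom_poly n k + 'X^(k.+1) * gbinom_poly n k.+1.
Proof.
have [lekn | ltnk] := leqP k n; last first.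
  by rewrite !gbinom_poly_gt ?mulr0 ?addr0 //; lia.
apply: gbinom_poly_unique => //; rewrite subSS.
exact: (gbinom_poly_pascal_fact (@gbinom_polyK n) lekn).
Qed.

Definition qpoch (q : algC) (n : nat) : algC := \prod_(1 <= l < n.+1) (1 - q ^+ l).

Definition qbinom_coef (q : algC) (n s : nat) : algC :=
  (-1) ^+ s * q ^+ 'C(s, 2) * gbinom q n s.

Lemma binS2 n : 'C(n.+1, 2) = ('C(n, 2) + n)%N.
Proof. by rewrite binS bin1. Qed.

Lemma bin2_addS n : ('C(n.+1, 2) + 'C(n, 2))%N = (n ^ 2)%N.
Proof. by elim: n => // n IHn; rewrite !binS2 -!mulnn in IHn *; nia. Qed.

Lemma qpoch0 q : qpoch q 0 = 1.
Proof. by rewrite /qpoch big_geq. Qed.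

Lemma qpochS q n : qpoch q n.+1 = qpoch q n * (1 - q ^+ n.+1).
Proof. by rewrite /qpoch big_nat_recr. Qed.

Section QSeries.

Variable q : algC.

Lemma gbinomSS n k :
  gbinom q n.+1 k.+1 = gbinom q n k + q ^+ k.+1 * gbinom q n k.+1.
Proof.
by rewrite /gbinom gbinom_polySS rmorphD rmorphM /= map_polyXn hornerD hornerM hornerXn.
Qed.

Lemma gbinom_n0 n : gbinom q n 0 = 1.
Proof. by rewrite /gbinom gbinom_poly_n0 rmorph1 hornerC. Qed.

Lemma gbinom_gt n k : (n < k)%N -> gbinom q n k = 0.
Proof. by move=> ltnk; rewrite /gbinom gbinom_poly_gt // rmorph0 horner0. Qed.

Lemma gbinom_nn n : gbinom q n n = 1.
Proof.
elim: n => [|n IHn]; first exact: gbinom_n0.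
by rewrite gbinomSS IHn gbinom_gt ?mulr0 ?addr0.
Qed.

Lemma qfactS_subr1 n : qfact q n.+1 * (q - 1) = qfact q n * (q ^+ n.+1 - 1).
Proof.
rewrite /qfact qfact_polyS rmorphM hornerM /qint_poly rmorph_sum horner_sum subrX1.
under eq_bigr do rewrite /= map_polyXn hornerXn.
by rewrite -mulrA [_ * (q - 1)]mulrC.
Qed.

Lemma qfact_subr1 n : qfact q n * (q - 1) ^+ n = (-1) ^+ n * qpoch q n.
Proof.
elim: n => [|n IHn].
  by rewrite /qfact qfact_poly0 rmorph1 hornerC qpoch0 !expr0 mulr1.
rewrite exprS mulrA qfactS_subr1 qpochS -mulrA (mulrC _ ((q - 1) ^+ n)) mulrA IHn.
by rewrite [(-1) ^+ n.+1]exprS; ring.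
Qed.

Lemma qpochV n : q != 0 ->
  qpoch q^-1 n = (-1) ^+ n * q ^- 'C(n.+1, 2) * qpoch q n.
Proof.
move=> q_neq0; elim: n => [|n IHn]; first by rewrite !qpoch0 expr0 divr1 mulr1.
rewrite !qpochS IHn (binS2 n.+1) exprD invfM exprVn !exprS.
by field; rewrite q_neq0 !expf_neq0.
Qed.

Lemma qbinom_coef0 n : qbinom_coef q n 0 = 1.
Proof. by rewrite /qbinom_coef gbinom_n0 !mulr1. Qed.

Lemma qbinom_coef_gt n s : (n < s)%N -> qbinom_coef q n s = 0.
Proof. by move=> ltns; rewrite /qbinom_coef gbinom_gt // mulr0. Qed.

Lemma qbinom_coefSS n s : qbinom_coef q n.+1 s.+1
  = qbinom_coef q n s.+1 * q ^+ s.+1 - qbinom_coef q n s * q ^+ s.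
Proof. by rewrite /qbinom_coef gbinomSS binS2 exprD !exprS; ring. Qed.

Theorem qbinomial n x :
  \prod_(l < n) (1 - x * q ^+ l) = \sum_(s < n.+1) qbinom_coef q n s * x ^+ s.
Proof.
elim: n x => [|n IHn] x; first by rewrite big_ord0 big_ord1 qbinom_coef0 mulr1.
rewrite big_ord_recl expr0 mulr1.
under eq_bigr do rewrite lift0 exprS mulrA.
rewrite IHn [in RHS]big_ord_recl qbinom_coef0 expr0 mulr1.
under [in RHS]eq_bigr do rewrite lift0 qbinom_coefSS mulrBl.
rewrite sumrB; set S := \sum_(s < n.+1) _.
rewrite [X in _ = 1 + (X - _)](_ : _ = S - 1); last first.
  rewrite big_ord_recr /= qbinom_coef_gt // !mul0r addr0.
  rewrite /S big_ord_recl qbinom_coef0 expr0 mulr1 addrC addKr.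
  by apply: eq_bigr => i _; rewrite lift0 exprMn mulrA mulrAC.
rewrite [X in _ = 1 + (_ - X)](_ : _ = x * S); last first.
  by rewrite mulr_sumr; apply: eq_bigr => i _; rewrite exprS exprMn; ring.
ring.
Qed.

Lemma gbinom_qpoch i a : q != 0 ->
  gbinom q i a * qpoch q a = \prod_(l < a) (1 - q ^+ i * q^-1 ^+ l).
Proof.
move=> q_neq0; elim: i a => [|i IHi] [|a].
- by rewrite gbinom_n0 qpoch0 big_ord0 mulr1.
- by rewrite gbinom_gt // mul0r big_ord_recl !expr0 mulr1 subrr mul0r.
- by rewrite gbinom_n0 qpoch0 big_ord0 mulr1.
have IHa := IHi a; have IHa1 := IHi a.+1; rewrite qpochS big_ord_recr /= in IHa1.
rewrite big_ord_recl expr0 mulr1.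
under eq_bigr do rewrite lift0 !exprS mulrACA mulfV // mul1r.
set R := \prod_(l < a) _ in IHa IHa1 *.
have qaV : q ^+ a * q^-1 ^+ a = 1 by rewrite -exprMn mulfV // expr1n.
rewrite gbinomSS !qpochS.
transitivity (gbinom q i a * qpoch q a * (1 - q ^+ a.+1)
  + q ^+ a.+1 * (gbinom q i a.+1 * (qpoch q a * (1 - q ^+ a.+1)))); first by ring.
rewrite IHa IHa1.
transitivity (R - R * q ^+ i.+1 * (q ^+ a * q^-1 ^+ a)); first by rewrite !exprS; ring.
by rewrite qaV; ring.
Qed.

Lemma qbinomial_widen n N x : (n < N)%N ->
  \prod_(l < n) (1 - x * q ^+ l) = \sum_(s < N) qbinom_coef q n s * x ^+ s.
Proof.
move=> ltnN; rewrite qbinomial (big_ord_widen N (fun s => qbinom_coef q n s * x ^+ s)) //.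
rewrite big_mkcond /=.
by apply: eq_bigr => s _; case: ltnP => // ltns; rewrite qbinom_coef_gt // mul0r.
Qed.

End QSeries.

Lemma sum_expr_unity_root (R : idomainType) m (w : R) :
  w ^+ m = 1 -> w != 1 -> \sum_(j < m) w ^+ j = 0.
Proof.
move=> wm1 w_neq1; have /esym/eqP := subrX1 w m.
by rewrite wm1 subrr mulf_eq0 subr_eq0 (negbTE w_neq1) => /eqP.
Qed.

Lemma invmx_diag (F : fieldType) n (d : 'rV[F]_n) : (forall i, d 0 i != 0) ->
  invmx (diag_mx d) = diag_mx (\row_i (d 0 i)^-1).
Proof.
move=> d_neq0; have dK : diag_mx d *m diag_mx (\row_i (d 0 i)^-1) = 1%:M.
  by rewrite mulmx_diag; apply/matrixP => i j; rewrite !mxE divff.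
have [d_unit _] := mulmx1_unit dK.
by rewrite -[RHS](mulKmx d_unit) dK mulmx1.
Qed.

Section GaussianMatrix.

Variables (m : nat) (q : algC).

Lemma Gmx_trig : is_trig_mx (Gmx m q).
Proof. by apply/is_trig_mxP => i j ltij; rewrite mxE gbinom_gt. Qed.

Lemma det_Gmx : \det (Gmx m q) = 1.
Proof. by rewrite det_trig ?Gmx_trig // big1 // => i _; rewrite mxE gbinom_nn. Qed.

Lemma Gmx_unit : Gmx m q \in unitmx.
Proof. by rewrite unitmxE det_Gmx unitr1. Qed.

End GaussianMatrix.

Section Integrality.

Variable z : algC.
Local Notation Zz := (in_Zzeta z).

Lemma in_Zzeta0 : Zz 0.
Proof. by exists 0; rewrite rmorph0 horner0. Qed.

Lemma in_Zzeta1 : Zz 1.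
Proof. by exists 1; rewrite rmorph1 hornerC. Qed.

Lemma in_ZzetaD x y : Zz x -> Zz y -> Zz (x + y).
Proof. by move=> [p ->] [r ->]; exists (p + r); rewrite rmorphD hornerD. Qed.

Lemma in_ZzetaN x : Zz x -> Zz (- x).
Proof. by move=> [p ->]; exists (- p); rewrite rmorphN hornerN. Qed.

Lemma in_ZzetaM x y : Zz x -> Zz y -> Zz (x * y).
Proof. by move=> [p ->] [r ->]; exists (p * r); rewrite rmorphM hornerM. Qed.

Lemma in_ZzetaX x n : Zz x -> Zz (x ^+ n).
Proof.
move=> Zx; elim: n => [|n IHn]; first by rewrite expr0; apply: in_Zzeta1.
by rewrite exprS; apply: in_ZzetaM.
Qed.

Lemma in_Zzeta_root : Zz z.
Proof. by exists 'X; rewrite map_polyX hornerX. Qed.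

Lemma in_Zzeta_sign n : Zz ((-1) ^+ n).
Proof. exact/in_ZzetaX/in_ZzetaN/in_Zzeta1. Qed.

Lemma in_Zzeta_sum I r (P : pred I) (F : I -> algC) :
  (forall i, P i -> Zz (F i)) -> Zz (\sum_(i <- r | P i) F i).
Proof. by move=> ZF; apply: big_ind => //; [apply: in_Zzeta0 | apply: in_ZzetaD]. Qed.

Lemma in_Zzeta_prod I r (P : pred I) (F : I -> algC) :
  (forall i, P i -> Zz (F i)) -> Zz (\prod_(i <- r | P i) F i).
Proof. by move=> ZF; apply: big_ind => //; [apply: in_Zzeta1 | apply: in_ZzetaM]. Qed.

Lemma in_Zzeta_gbinom q n k : Zz q -> Zz (gbinom q n k).
Proof.
move=> Zq; elim: n k => [|n IHn] [|k]; try by rewrite gbinom_n0; apply: in_Zzeta1.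
  by rewrite gbinom_gt //; apply: in_Zzeta0.
by rewrite gbinomSS; apply/in_ZzetaD/in_ZzetaM/IHn/in_ZzetaX.
Qed.

Definition in_Zzeta_mx r c (A : 'M[algC]_(r, c)) := forall i j, Zz (A i j).

Lemma in_Zzeta_mulmx r n c (A : 'M_(r, n)) (B : 'M_(n, c)) :
  in_Zzeta_mx A -> in_Zzeta_mx B -> in_Zzeta_mx (A *m B).
Proof. by move=> ZA ZB i j; rewrite mxE; apply: in_Zzeta_sum => k _; apply: in_ZzetaM. Qed.

Lemma in_Zzeta_invmx n (A : 'M_n) :
  \det A = 1 -> in_Zzeta_mx A -> in_Zzeta_mx (invmx A).
Proof.
move=> detA1 ZA i j; rewrite /invmx unitmxE detA1 unitr1 invr1 scale1r mxE.
rewrite expand_cofactor; apply: in_Zzeta_sum => s _.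
by apply/in_ZzetaM/in_Zzeta_prod => [|k _]; [apply: in_Zzeta_sign | apply: ZA].
Qed.

Lemma in_Zzeta_Gmx m q : Zz q -> in_Zzeta_mx (Gmx m q).
Proof. by move=> Zq i j; rewrite mxE; apply: in_Zzeta_gbinom. Qed.

End Integrality.

Section PrimitiveRoot.

Variables (m : nat) (z : algC).
Hypotheses (m_gt0 : (0 < m)%N) (z_prim : m.-primitive_root z).

Lemma prim_root_neq0 : z != 0.
Proof.
apply/eqP => z0; have := prim_expr_order z_prim.
by rewrite z0 expr0n gtn_eqF // => /esym/eqP; rewrite oner_eq0.
Qed.

Lemma prim_root_invE : z^-1 = z ^+ m.-1.
Proof.
apply: (mulIf prim_root_neq0).
by rewrite mulVf ?prim_root_neq0 // -exprSr prednK // prim_expr_order.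
Qed.

Lemma qpoch_prim_root_neq0 j : (j < m)%N -> qpoch z j != 0.
Proof.
move=> ltjm; rewrite /qpoch prodf_seq_neq0; apply/allP => l.
rewrite mem_index_iota => /andP[l_gt0 ltlj] /=; rewrite subr_eq0 eq_sym.
by rewrite -(prim_order_dvd z_prim); apply: contraTN l_gt0 => /dvdn_leq; lia.
Qed.

Lemma qpoch_prim_rootV_neq0 j : (j < m)%N -> qpoch z^-1 j != 0.
Proof.
move=> ltjm; rewrite qpochV ?prim_root_neq0 // !mulf_neq0 ?signr_eq0 //.
  by rewrite invr_eq0 expf_neq0 ?prim_root_neq0.
exact: qpoch_prim_root_neq0.
Qed.

Lemma sum_prim_root_orth i s : (i < m)%N -> (s < m)%N ->
  \sum_(j < m) (z ^+ i * z^-1 ^+ s) ^+ j = if i == s then m%:R else 0.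
Proof.
move=> ltim ltsm; case: eqP => [<- | neq_is].
  under eq_bigr do rewrite exprVn mulfV ?expf_neq0 ?prim_root_neq0 // expr1n.
  by rewrite sumr_const card_ord.
have zV_s : z^-1 ^+ s * z ^+ s = 1.
  by rewrite exprVn mulVf ?expf_neq0 ?prim_root_neq0.
have unity_m x k : x ^+ m = 1 -> (x ^+ k) ^+ m = 1.
  by move=> xm; rewrite -exprM mulnC exprM xm expr1n.
apply: sum_expr_unity_root.
  by rewrite exprMn !unity_m ?mulr1 // ?exprVn (prim_expr_order z_prim) ?invr1.
apply/eqP => w1; apply: neq_is.
have /eqP : z ^+ i = z ^+ s by rewrite -[LHS]mulr1 -zV_s mulrA w1 mul1r.
by rewrite (eq_prim_root_expr z_prim) !modn_small // => /eqP.
Qed.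

Local Notation G := (Gmx m z^-1).
Local Notation V := (Vmx m z).
Local Notation GVG := ((Gmx m z^-1)^T *m Vmx m z *m Gmx m z^-1).

Lemma mulVG_entry (i b : 'I_m) :
  (V *m G) i b = m%:R * qbinom_coef z b i / qpoch z^-1 b.
Proof.
have E_neq0 := qpoch_prim_rootV_neq0 (ltn_ord b).
have gbinomE j : gbinom z^-1 j b
    = (\sum_(s < m) qbinom_coef z b s * (z^-1 ^+ j) ^+ s) / qpoch z^-1 b.
  have := gbinom_qpoch j b (invr_neq0 prim_root_neq0).
  by rewrite invrK (qbinomial_widen _ _ (ltn_ord b)) => <-; rewrite mulfK.
rewrite mxE; transitivity (\sum_(j < m) \sum_(s < m)
    qbinom_coef z b s / qpoch z^-1 b * (z ^+ i * z^-1 ^+ s) ^+ j).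
  apply: eq_bigr => j _; rewrite !mxE gbinomE mulr_suml mulr_sumr.
  by apply: eq_bigr => s _; rewrite exprMn -!exprM (mulnC s j); ring.
rewrite exchange_big (bigD1 i) //= -mulr_sumr sum_prim_root_orth // eqxx.
rewrite big1 ?addr0 => [|s neq_si]; first by ring.
by rewrite -mulr_sumr sum_prim_root_orth // val_eqE eq_sym (negbTE neq_si) mulr0.
Qed.

Lemma GVG_entry_sum (a b : 'I_m) :
  GVG a b = \sum_(i < m) gbinom z^-1 i a * (V *m G) i b.
Proof. by rewrite -mulmxA mxE; apply: eq_bigr => i _; rewrite !mxE. Qed.

Lemma GVG_sym : GVG^T = GVG.
Proof.
have V_sym : V^T = V by apply/matrixP => i j; rewrite !mxE mulnC.
by rewrite !trmx_mul trmxK V_sym mulmxA.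
Qed.

Lemma GVG_lower0 (a b : 'I_m) : (b < a)%N -> GVG a b = 0.
Proof.
move=> ltba; rewrite GVG_entry_sum big1 // => i _; rewrite mulVG_entry.
have [ltia | leai] := ltnP i a; first by rewrite gbinom_gt // mul0r.
by rewrite qbinom_coef_gt ?(mulr0, mul0r) //; exact: leq_trans ltba leai.
Qed.

Lemma GVG_diag (a : 'I_m) : GVG a a = m%:R * z ^+ (a ^ 2) / qpoch z a.
Proof.
rewrite GVG_entry_sum (bigD1 a) //= big1 ?addr0 => [|i neq_ia]; last first.
  rewrite mulVG_entry; case: (ltngtP i a) => [ltia | ltai | /val_inj eq_ia].
  - by rewrite gbinom_gt // mul0r.
  - by rewrite qbinom_coef_gt // mulr0 mul0r mulr0.
  - by rewrite eq_ia eqxx in neq_ia.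
have z_neq0 := prim_root_neq0; have P_neq0 := qpoch_prim_root_neq0 (ltn_ord a).
rewrite mulVG_entry gbinom_nn /qbinom_coef gbinom_nn qpochV // -bin2_addS exprD.
by field; rewrite P_neq0 signr_eq0 expf_neq0.
Qed.

Lemma GVG_entry (a b : 'I_m) :
  GVG a b = if a == b then m%:R * z ^+ (a ^ 2) / qpoch z a else 0.
Proof.
case: eqP => [<- | neq_ab]; first exact: GVG_diag.
case: (ltngtP a b) => [ltab | ltba | /val_inj //].
  by rewrite -GVG_sym mxE GVG_lower0.
exact: GVG_lower0.
Qed.

Lemma Dmx_primV : Dmx m z^-1 = diag_mx (\row_i (z ^- (i ^ 2) * qpoch z i)).
Proof.
congr diag_mx; apply/rowP => i; rewrite !mxE qfact_subr1 qpochV ?prim_root_neq0 //.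
by rewrite -bin2_addS exprD invfM exprVn -!mulrA signrMK; ring.
Qed.

Lemma GVG_invD : GVG = m%:R *: invmx (Dmx m z^-1).
Proof.
rewrite Dmx_primV invmx_diag => [|i]; last first.
  by rewrite mxE mulf_neq0 ?invr_eq0 ?expf_neq0 ?prim_root_neq0 ?qpoch_prim_root_neq0.
apply/matrixP => a b; rewrite GVG_entry !mxE.
have [-> | _] := eqVneq a b; last by rewrite mulr0n mulr0.
by rewrite mulr1n invfM invrK mulrA.
Qed.

Local Notation Zz := (in_Zzeta z).

Lemma in_Zzeta_rootV : Zz z^-1.
Proof. by rewrite prim_root_invE; apply/in_ZzetaX/in_Zzeta_root. Qed.

Lemma in_Zzeta_omega (a : 'I_m -> algC) : (forall k, Zz (a k)) -> forall j, Zz (omega z a j).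
Proof.
move=> Za j; apply: in_Zzeta_sum => k _.
by apply/in_ZzetaM/in_ZzetaX/in_ZzetaX/in_Zzeta_root.
Qed.

Lemma omega_col (a : 'I_m -> algC) : \col_j omega z a j = V *m \col_k a k.
Proof.
by apply/colP => j; rewrite !mxE; apply: eq_bigr => k _; rewrite !mxE exprM mulrC.
Qed.

Lemma trG_col_entry (y : 'I_m -> algC) (i : 'I_m) :
  (G^T *m \col_k y k) i 0 = \sum_(j < m | (i <= j)%N) y j * gbinom z^-1 j i.
Proof.
rewrite mxE [RHS]big_mkcond; apply: eq_bigr => j _; rewrite !mxE mulrC.
by case: leqP => // ltji; rewrite gbinom_gt // mulr0.
Qed.

Lemma mulGVG_entry (c : 'cV_m) (i : 'I_m) :
  (GVG *m c) i 0 = m%:R * z ^+ (i ^ 2) / qpoch z i * c i 0.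
Proof.
rewrite mxE (bigD1 i) //= big1 ?addr0 => [|j neq_ji]; first by rewrite GVG_entry eqxx.
by rewrite GVG_entry eq_sym (negbTE neq_ji) mul0r.
Qed.

Lemma in_Zzeta_invG : in_Zzeta_mx z (invmx G).
Proof. exact/in_Zzeta_invmx/in_Zzeta_Gmx/in_Zzeta_rootV/det_Gmx. Qed.

Lemma omega_imageP (y : 'I_m -> algC) : omega_image z y <->
  ((forall j, Zz (y j)) /\
   forall i : 'I_m, exists w, Zz w /\
     \sum_(j < m | (i <= j)%N) y j * gbinom z^-1 j i = w * (m%:R / qpoch z i)).
Proof.
split=> [[a [Za y_omega]] | [Zy /fin_all_exists[w /all_and2[Zw Sw]]]].
  have y_col : \col_j y j = V *m \col_k a k.
    by rewrite -omega_col; apply/colP => j; rewrite !mxE y_omega.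
  split=> [j | i]; first by rewrite y_omega; apply: in_Zzeta_omega.
  pose c := invmx G *m \col_k a k.
  have Zc : in_Zzeta_mx z c.
    by apply: in_Zzeta_mulmx in_Zzeta_invG _ => k l; rewrite mxE.
  have trG_y : G^T *m \col_j y j = GVG *m c by rewrite y_col -!mulmxA mulKVmx ?Gmx_unit.
  exists (z ^+ (i ^ 2) * c i 0); split; first exact/in_ZzetaM/Zc/in_ZzetaX/in_Zzeta_root.
  by rewrite -trG_col_entry trG_y mulGVG_entry; ring.
pose a := G *m \col_i (w i * z^-1 ^+ (i ^ 2)).
have Za : in_Zzeta_mx z a.
  apply: in_Zzeta_mulmx => [|i j]; first exact/in_Zzeta_Gmx/in_Zzeta_rootV.
  by rewrite mxE; apply/in_ZzetaM/in_ZzetaX/in_Zzeta_rootV.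
exists (fun k => a k 0); split=> [k | ]; first exact: Za.
have trG_Va : G^T *m (V *m a) = G^T *m \col_j y j.
  apply/colP => i; rewrite !mulmxA mulGVG_entry trG_col_entry Sw mxE exprVn.
  by field; rewrite qpoch_prim_root_neq0 ?expf_neq0 ?prim_root_neq0.
have Va_y : V *m a = \col_j y j.
  by move/(congr1 (mulmx (invmx G^T))): trG_Va; rewrite !mulKmx ?unitmx_tr ?Gmx_unit.
have a_col : \col_k a k 0 = a by apply/colP => k; rewrite mxE.
move=> j; have /colP/(_ j) := omega_col (fun k => a k 0).
by rewrite a_col Va_y !mxE.
Qed.

Definition omega_basis (j k : 'I_m) : algC :=
  (-1) ^+ k * z ^+ 'C(k, 2) * (m%:R / qpoch z j) * gbinom z j k.

Lemma omega_basisE j k :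
  omega_basis j k = (-1) ^+ j * z ^- 'C(j.+1, 2) * (V *m G) k j.
Proof.
have P_neq0 := qpoch_prim_root_neq0 (ltn_ord j).
rewrite mulVG_entry qpochV ?prim_root_neq0 // /omega_basis /qbinom_coef.
by field; rewrite P_neq0 signr_eq0 expf_neq0 ?prim_root_neq0.
Qed.

Lemma omega_basis_image j : omega_image z (omega_basis j).
Proof.
exists (fun k => (-1) ^+ j * z^-1 ^+ 'C(j.+1, 2) * gbinom z^-1 k j); split=> [k | l].
  apply/in_ZzetaM/in_Zzeta_gbinom/in_Zzeta_rootV.
  exact/in_ZzetaM/in_ZzetaX/in_Zzeta_rootV/in_Zzeta_sign.
rewrite omega_basisE mxE mulr_sumr exprVn; apply: eq_bigr => k _.
by rewrite !mxE exprM; ring.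
Qed.

Lemma omega_basis_span y : omega_image z y ->
  exists a : 'I_m -> algC, (forall j, Zz (a j)) /\
    forall k, y k = \sum_(j < m) a j * omega_basis j k.
Proof.
move=> [a [Za y_omega]]; pose c := invmx G *m \col_k a k.
have Zc : in_Zzeta_mx z c by apply: in_Zzeta_mulmx in_Zzeta_invG _ => k l; rewrite mxE.
exists (fun j => c j 0 * ((-1) ^+ j * z ^+ 'C(j.+1, 2))); split=> [j | k].
  exact/in_ZzetaM/in_ZzetaM/in_ZzetaX/in_Zzeta_root/in_Zzeta_sign.
have /colP/(_ k) := omega_col a; rewrite mxE -y_omega => ->.
rewrite -[\col_k a k](mulKVmx (Gmx_unit m z^-1)) -/c mulmxA mxE.
apply: eq_bigr => j _; rewrite omega_basisE.
have uK : (-1) ^+ j * z ^+ 'C(j.+1, 2) * ((-1) ^+ j * z ^- 'C(j.+1, 2)) = 1.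
  by rewrite mulrACA -expr2 sqrr_sign mul1r mulfV ?expf_neq0 ?prim_root_neq0.
by rewrite -[RHS]mulrA [_ * (_ / _ * _)]mulrA uK mul1r mulrC.
Qed.

Lemma omega_basis_free (a : 'I_m -> algC) :
  (forall k, \sum_(j < m) a j * omega_basis j k = 0) -> forall j, a j = 0.
Proof.
move=> dep j; pose v : 'cV_m := \col_j ((-1) ^+ j * z ^- 'C(j.+1, 2) * a j).
have VGv0 : V *m G *m v = 0.
  apply/colP => k; rewrite !mxE -[RHS](dep k); apply: eq_bigr => i _.
  by rewrite omega_basisE [v i 0]mxE; ring.
have /eqP := mulGVG_entry v j.
rewrite -!mulmxA [V *m (G *m v)]mulmxA VGv0 mulmx0 mxE eq_sym mxE.
rewrite !mulf_eq0 invr_eq0 (negbTE (qpoch_prim_root_neq0 (ltn_ord j))) pnatr_eq0.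
rewrite eqn0Ngt m_gt0 invr_eq0 signr_eq0 !expf_eq0 (negbTE prim_root_neq0) !andbF.
by move/eqP.
Qed.

End PrimitiveRoot.

Theorem proposition3p8 (m : nat) (zeta : algC) (hm : (0 < m)%N)
    (hzeta : m.-primitive_root zeta) :
  (* (i) *)
  ((Gmx m zeta^-1)^T *m Vmx m zeta *m Gmx m zeta^-1 = m%:R *: invmx (Dmx m zeta^-1)
   /\ forall i j : 'I_m,
       ((Gmx m zeta^-1)^T *m Vmx m zeta *m Gmx m zeta^-1) i j =
       (if i == j then
          m%:R * zeta ^+ (i ^ 2) / \prod_(1 <= l < i.+1) (1 - zeta ^+ l)
        else 0))
  (* (ii) *)
  /\ (forall y : 'I_m -> algC,
        omega_image zeta y <->
        ((forall j, in_Zzeta zeta (y j)) /\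
         forall i : 'I_m, exists z : algC, in_Zzeta zeta z /\
           \sum_(j < m | (i <= j)%N) y j * gbinom zeta^-1 j i =
           z * (m%:R / \prod_(1 <= l < i.+1) (1 - zeta ^+ l))))
  (* (iii) *)
  /\ (let b (j k : 'I_m) : algC :=
        (-1) ^+ k * zeta ^+ 'C(k, 2) * (m%:R / \prod_(1 <= l < j.+1) (1 - zeta ^+ l))
        * gbinom zeta j k in
      (forall j, omega_image zeta (b j))
      /\ (forall y, omega_image zeta y ->
            exists a : 'I_m -> algC, (forall j, in_Zzeta zeta (a j)) /\
              forall k, y k = \sum_(j < m) a j * b j k)
      /\ (forall a : 'I_m -> algC, (forall j, in_Zzeta zeta (a j)) ->
            (forall k, \sum_(j < m) a j * b j k = 0) -> forall j, a j = 0)).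
Proof.
split; first by split; [exact: GVG_invD | exact: GVG_entry].
split; first exact: omega_imageP.
split; first exact: omega_basis_image.
split; first exact: omega_basis_span.
by move=> a _; exact: omega_basis_free.
Qed.
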